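(* Let $X$ be a Tychonoff space. The socle of $T''(X)$ consists exactly of those $f\in T''(X)$ for which $\{x\in X: f(x)\neq 0\}$ is finite.
   Context: $C(X)$ is the ring of real-valued continuous functions on $X$; a cozero set is a set $\{x: h(x)\neq 0\}$ with $h\in C(X)$. $T''(X)$ is the ring (under pointwise operations) of all functions $f\colon X\to\mathbb{R}$ for which there is a dense cozero set $U$ of $X$ with $f|_U$ continuous. The socle of a ring is the sum of its minimal ideals. *)

From HB Require Import structures.
From mathcomp Require Import all_boot all_order all_algebra.
From mathcomp Require Import all_classical all_reals all_analysis.
Set Implicit Arguments. Unset Strict Implicit. Unset Printing Implicit Defensive.
Import Order.TTheory GRing.Theory Num.Theory.
Import numFieldNormedType.Exports.
Local Open Scope classical_set_scope.
Local Open Scope ring_scope.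

Section TppDefs.
Variables (R : realType) (X : topologicalType).

(** Tychonoff = T1 + completely regular (points and closed sets are
    separated by continuous real-valued functions). *)
Definition tychonoff_space : Prop :=
  @accessible_space X /\
  (forall (a : X) (B : set X), closed B -> ~ B a ->
     exists h : X -> R, [/\ continuous h, h a = 0 & forall b, B b -> h b = 1]).

Definition coz (h : X -> R) : set X := [set x | h x != 0].

Definition cozero_set (U : set X) : Prop :=
  exists h : X -> R, continuous h /\ U = coz h.

Definition Tpp : set (X -> R) :=
  [set f | exists U : set X, [/\ cozero_set U, dense U & {within U, continuous f}]].

Definition Tpp_ideal (I : set (X -> R)) : Prop :=
  [/\ I `<=` Tpp,
      I (fun _ => 0),
      (forall f g, I f -> I g -> I (fun x => f x - g x)) &
      (forall f g, I f -> Tpp g -> I (fun x => g x * f x))].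

Definition Tpp_minimal_ideal (I : set (X -> R)) : Prop :=
  [/\ Tpp_ideal I,
      I <> [set (fun _ => 0)] &
      (forall J, Tpp_ideal J -> J `<=` I -> J = [set (fun _ => 0)] \/ J = I)].

(** socle = sum of all minimal ideals = finite sums of elements of
    minimal ideals (the empty sum gives 0) *)
Definition Tpp_socle : set (X -> R) :=
  [set f | exists (n : nat) (g : 'I_n -> X -> R),
     f = (fun x => \sum_(i < n) g i x) /\
     forall i, exists I, Tpp_minimal_ideal I /\ I (g i)].

End TppDefs.

From HB Require Import structures.
From mathcomp Require Import all_boot all_order all_algebra.
From mathcomp Require Import all_classical all_reals all_analysis.
Import Order.TTheory GRing.Theory Num.Theory.
Import numFieldNormedType.Exports.
Local Open Scope classical_set_scope.
Local Open Scope ring_scope.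

(* A nonzero element g of a minimal ideal generates it. If g were nonzero at
   two points a <> b, a continuous h with h(b) = 0 and h(a) = 1 would give a
   nonzero element h g of the ideal whose multiples all vanish at b, so they
   could not include g: hence g has at most one point in its support.
   Conversely, if g is supported at the single point a then r g = r(a) g for
   every r, so g generates a minimal ideal; and a function of finite support
   splits, using Tychonoff separating functions, into a finite sum of such
   functions. *)

Section Tpp_ring.
Variables (R : realType) (X : topologicalType).
Implicit Types (f g h r : X -> R) (I J : set (X -> R)).

Lemma open_coz {h} : continuous h -> open (coz h).
Proof.
move=> hc; have -> : coz h = h @^-1` (~` [set 0]).
  by apply/seteqP; split => x /=; rewrite /coz /= => /eqP.
move/continuousP: hc; apply; apply: closed_openC.
exact/accessible_closed_set1/hausdorff_accessible/Rhausdorff.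
Qed.

Lemma cozero_setI (U V : set X) :
  cozero_set R U -> cozero_set R V -> cozero_set R (U `&` V).
Proof.
move=> [h1 [h1c ->]] [h2 [h2c ->]]; exists (fun x => h1 x * h2 x); split.
  by move=> x; apply: continuousM; [exact: h1c | exact: h2c].
by apply/seteqP; split => x; rewrite /coz /= mulf_eq0 negb_or => /andP.
Qed.

Lemma Tpp_continuous {f} : continuous f -> Tpp f.
Proof.
move=> cf; exists setT; split.
- exists (fun=> 1); split; first exact: cst_continuous.
  by apply/seteqP; split => x //= _; rewrite /coz /= oner_neq0.
- by move=> O [x Ox] _; exists x.
- exact: continuous_subspaceT.
Qed.

Lemma Tpp_cst (c : R) : Tpp (fun _ : X => c).
Proof. exact/Tpp_continuous/cst_continuous. Qed.

Lemma Tpp_common_domain {f g} : Tpp f -> Tpp g ->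
  exists U : set X, [/\ cozero_set R U, dense U,
    {within U, continuous f} & {within U, continuous g}].
Proof.
move=> [_ [[h [hc ->]] dU cf]] [V [cV dV cg]]; exists (coz h `&` V); split.
- by apply: cozero_setI => //; exists h.
- exact: denseI (open_coz hc) dU dV.
- exact: continuous_subspaceW cf.
- exact: continuous_subspaceW cg.
Qed.

Lemma TppD f g : Tpp f -> Tpp g -> Tpp (fun x => f x + g x).
Proof.
move=> Tf Tg; have [U [cU dU cf cg]] := Tpp_common_domain Tf Tg.
by exists U; split=> // x; exact: continuousD (cf x) (cg x).
Qed.

Lemma TppB f g : Tpp f -> Tpp g -> Tpp (fun x => f x - g x).
Proof.
move=> Tf Tg; have [U [cU dU cf cg]] := Tpp_common_domain Tf Tg.
by exists U; split=> // x; exact: continuousB (cf x) (cg x).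
Qed.

Lemma TppM f g : Tpp f -> Tpp g -> Tpp (fun x => f x * g x).
Proof.
move=> Tf Tg; have [U [cU dU cf cg]] := Tpp_common_domain Tf Tg.
by exists U; split=> // x; exact: continuousM (cf x) (cg x).
Qed.

Lemma cozD f g : coz (fun x => f x + g x) `<=` coz f `|` coz g.
Proof.
move=> x; rewrite /coz /=; have [f0|fx _] := eqVneq (f x) 0; last by left.
by rewrite f0 add0r; right.
Qed.

Definition Tpp_principal g : set (X -> R) := [set (fun x => r x * g x) | r in @Tpp R X].

Lemma Tpp_principal_id g : Tpp_principal g g.
Proof. by exists (fun=> 1); [exact: Tpp_cst | apply: funext => x; rewrite mul1r]. Qed.

Lemma Tpp_principal_ideal {g} : Tpp g -> Tpp_ideal (Tpp_principal g).
Proof.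
move=> Tg; split.
- by move=> _ [r Tr <-]; exact: TppM.
- by exists (fun=> 0); [exact: Tpp_cst | apply: funext => x; rewrite mul0r].
- move=> _ _ [r1 Tr1 <-] [r2 Tr2 <-]; exists (fun x => r1 x - r2 x).
    exact: TppB.
  by apply: funext => x; rewrite mulrBl.
- move=> _ u [r Tr <-] Tu; exists (fun x => u x * r x); first exact: TppM.
  by apply: funext => x; rewrite mulrA.
Qed.

Lemma Tpp_principal_sub {I g} : Tpp_ideal I -> I g -> Tpp_principal g `<=` I.
Proof. by move=> [_ _ _ IM] Ig _ [r Tr <-]; exact: IM. Qed.

Lemma Tpp_minimal_ideal_principal {I g} : Tpp_minimal_ideal I -> I g ->
  g <> (fun=> 0) -> Tpp_principal g = I.
Proof.
move=> [idI _ Imin] Ig g0; have [Isub _ _ _] := idI.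
have [Pg0|//] := Imin _ (Tpp_principal_ideal (Isub g Ig)) (Tpp_principal_sub idI Ig).
by move: (Tpp_principal_id g); rewrite Pg0.
Qed.

Lemma Tpp_socle0 : Tpp_socle (fun _ : X => 0 : R).
Proof.
exists 0%N, (fun _ _ => 0); split; last by move=> [m]; rewrite ltn0.
by apply: funext => x; rewrite big_ord0.
Qed.

Lemma Tpp_socleD f g : Tpp_socle f -> Tpp_socle g -> Tpp_socle (fun x => f x + g x).
Proof.
move=> [n [F [-> HF]]] [m [G [-> HG]]].
exists (n + m)%N, (fun i => match fintype.split i with inl j => F j | inr k => G k end).
split; last by move=> i; case: (fintype.split i) => [j|k]; [exact: HF | exact: HG].
apply: funext => x; rewrite big_split_ord /=.
by congr (_ + _); apply: eq_bigr => i _;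
  [rewrite (unsplitK (inl i)) | rewrite (unsplitK (inr i))].
Qed.

Lemma Tpp_socle_minimal {I g} : Tpp_minimal_ideal I -> I g -> Tpp_socle g.
Proof.
move=> mI Ig; exists 1%N, (fun=> g); split; last by move=> _; exists I.
by apply: funext => x; rewrite big_ord1.
Qed.

Lemma mul_coz_sub_set1 {g a} : coz g `<=` [set a] ->
  forall r, (fun x => r x * g x) = (fun x => r a * g x).
Proof.
move=> cga r; apply: funext => x.
have [gx0|gx] := eqVneq (g x) 0; first by rewrite gx0 !mulr0.
by rewrite (cga x gx).
Qed.

Lemma Tpp_principal_minimal {g a} : Tpp g -> g a != 0 ->
  coz g `<=` [set a] -> Tpp_minimal_ideal (Tpp_principal g).
Proof.
move=> Tg ga cga; split; first exact: Tpp_principal_ideal.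
  move=> P0; move: (Tpp_principal_id g); rewrite P0 => /(congr1 (fun u => u a)) /eqP.
  by rewrite (negbTE ga).
move=> J idJ JP; have [_ J0 _ JM] := idJ.
have [[u [Ju u0]]|J_trivial] := pselect (exists u, J u /\ u <> (fun=> 0)); last first.
  left; apply/seteqP; split => [v Jv|_ ->] //=.
  by apply: contrapT => v0; apply: J_trivial; exists v.
right; apply/seteqP; split => //; apply: Tpp_principal_sub idJ _.
have [r _] := JP u Ju; rewrite (mul_coz_sub_set1 cga) => ru.
have ra : r a != 0.
  by apply/eqP => ra0; apply: u0; rewrite -ru ra0; apply: funext => x; rewrite mul0r.
have := JM u (fun=> (r a)^-1) Ju (Tpp_cst _); congr J.
by apply: funext => x; rewrite -ru mulrA mulVf // mul1r.
Qed.

Lemma Tpp_socle_point g a : Tpp g -> coz g `<=` [set a] -> Tpp_socle g.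
Proof.
move=> Tg cga; have [g0|ga] := eqVneq (g a) 0.
  suff -> : g = (fun=> 0) by exact: Tpp_socle0.
  apply: funext => x; apply/eqP; apply: contraT => gx.
  by move: (gx); rewrite (cga x gx) g0 eqxx.
exact: Tpp_socle_minimal (Tpp_principal_minimal Tg ga cga) (Tpp_principal_id g).
Qed.

Section Tychonoff.
Hypothesis tychX : tychonoff_space R X.

Lemma tychonoff_separate_finite {a : X} {B : set X} : finite_set B -> ~ B a ->
  exists h, [/\ continuous h, h a = 0 & forall b, B b -> h b = 1].
Proof.
have [T1 sep] := tychX; move=> fB Ba; apply: sep Ba.
by move: T1 => /accessible_finite_set_closed; apply.
Qed.

Lemma Tpp_minimal_ideal_coz_subsingleton {I g a b} : Tpp_minimal_ideal I -> I g ->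
  coz g a -> coz g b -> a = b.
Proof.
move=> mI Ig ga gb; apply: contrapT => ab.
have [h [hc hb ha]] :=
  tychonoff_separate_finite (finite_set1 a) (fun ba => ab (esym ba)).
have [[_ _ _ IM] _ _] := mI.
have Ihg : I (fun x => h x * g x) := IM g h Ig (Tpp_continuous hc).
have hg0 : (fun x => h x * g x) <> (fun=> 0).
  by move=> /(congr1 (fun u => u a)) /eqP; rewrite ha // mul1r (negbTE ga).
move: Ig; rewrite -(Tpp_minimal_ideal_principal mI Ihg hg0) => -[r _].
move=> /(congr1 (fun u => u b)) /eqP.
by rewrite hb mul0r mulr0 eq_sym (negbTE gb).
Qed.

Lemma Tpp_minimal_ideal_finite_coz {I g} : Tpp_minimal_ideal I -> I g -> finite_set (coz g).
Proof.
move=> mI Ig; have [[a ga]|coz0] := pselect (coz g !=set0).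
  apply: sub_finite_set (finite_set1 a) => b gb.
  exact: Tpp_minimal_ideal_coz_subsingleton mI Ig gb ga.
by apply: sub_finite_set (finite_set0 X) => b gb; apply: coz0; exists b.
Qed.

Lemma Tpp_socle_finite_coz f : Tpp_socle f -> Tpp f /\ finite_set (coz f).
Proof.
move=> [n [g [-> mg]]]; rewrite -fct_sumE.
apply: (big_ind (fun h => Tpp h /\ finite_set (coz h))).
- split; first exact: Tpp_cst.
  by apply: sub_finite_set (finite_set0 X) => x; rewrite /coz /= eqxx.
- move=> h1 h2 [T1 F1] [T2 F2]; split; first exact: TppD.
  by apply: sub_finite_set (cozD h1 h2) _; rewrite finite_setU.
- move=> i _; have [I [mI Ii]] := mg i; have [[Isub _ _ _] _ _] := mI.
  by split; [exact: Isub | exact: Tpp_minimal_ideal_finite_coz mI Ii].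
Qed.

Lemma Tpp_socle_coz_seq (s : seq X) f : Tpp f -> coz f `<=` [set` s] -> Tpp_socle f.
Proof.
elim: s f => [|a s IH] f Tf cfs.
  suff -> : f = (fun=> 0) by exact: Tpp_socle0.
  by apply: funext => x; apply/eqP; apply: contraT => /cfs.
have [h [hc ha hs]] := tychonoff_separate_finite (finite_setD [set a] (finite_seq s))
  (fun Ba => Ba.2 erefl).
have Th := Tpp_continuous hc.
(* [h] vanishes at [a] and is [1] on the rest of [s], so [f (1 - h)] is
   supported at [a] and [f h] inside [s]. *)
have -> : f = (fun x => f x * (1 - h x) + f x * h x).
  by apply: funext => x; rewrite mulrBr mulr1 subrK.
apply: Tpp_socleD.
  apply: (@Tpp_socle_point _ a).
    by apply: TppM => //; apply: TppB => //; exact: Tpp_cst.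
  move=> x; rewrite /coz /= mulf_eq0 negb_or => /andP[fx hx1]; apply: contrapT => xa.
  move: hx1; rewrite hs ?subrr ?eqxx //; split=> //.
  by have := cfs x fx; rewrite /= inE => /orP[/eqP|].
apply: IH; first exact: TppM.
move=> x; rewrite /coz /= mulf_eq0 negb_or => /andP[fx hx].
have := cfs x fx; rewrite /= inE => /orP[/eqP xa|//].
by rewrite xa ha eqxx in hx.
Qed.

Lemma finite_coz_Tpp_socle f : Tpp f -> finite_set (coz f) -> Tpp_socle f.
Proof. by move=> Tf /finite_seqP[s cs]; apply: (Tpp_socle_coz_seq s f Tf); rewrite cs. Qed.

End Tychonoff.
End Tpp_ring.

Theorem theorem5p2 (R : realType) (X : topologicalType) :
  @tychonoff_space R X ->
  @Tpp_socle R X = [set f | @Tpp R X f /\ finite_set (@coz R X f)].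
Proof.
move=> tychX; apply/seteqP; split => f.
  exact: Tpp_socle_finite_coz.
by move=> [Tf cf]; exact: finite_coz_Tpp_socle.
Qed.
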